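(* Let $X$ be an irreducible affine variety over $\mathbb{C}$, $\mathcal{F}$ an algebraic foliation on $X$, and $Y\subseteq X$ an irreducible Zariski closed subset. Then for all $f,g\in\mathcal{O}_X$: (1) $\mathrm{ord}_{\mathcal{F},Y}(f+g)\ge\min\{\mathrm{ord}_{\mathcal{F},Y}(f),\mathrm{ord}_{\mathcal{F},Y}(g)\}$, with equality if $\mathrm{ord}_{\mathcal{F},Y}(f)\ne\mathrm{ord}_{\mathcal{F},Y}(g)$; (2) $\mathrm{ord}_{\mathcal{F},Y}(fg)=\mathrm{ord}_{\mathcal{F},Y}(f)+\mathrm{ord}_{\mathcal{F},Y}(g)$ (with the convention that a sum involving $+\infty$ is $+\infty$).
   Context: $\mathcal{O}_X$ is the ring of regular functions on $X$; an algebraic foliation $\mathcal{F}$ is a collection of $\mathbb{C}$-derivations of $\mathcal{O}_X$ stable under Lie bracket; $M_{\mathcal{F}}$ is the $\mathcal{O}_X$-module generated by $\mathcal{F}$. $I_Y$ is the ideal of regular functions vanishing on $Y$. Fix generators $\partial_1,\dots,\partial_r$ of $M_{\mathcal{F}}$; for $I=(i_1,\dots,i_m)\in\{1,\dots,r\}^m$ set $\partial_I=\partial_{i_1}\circ\cdots\circ\partial_{i_m}$, $|I|=m$, with $\partial_\emptyset=\mathrm{id}$ and $|\emptyset|=0$. The contact order is $\mathrm{ord}_{\mathcal{F},Y}(f)=\inf\{|I|:\ \partial_I(f)\notin I_Y\}\in\mathbb{N}\cup\{+\infty\}$; it does not depend on the choice of generators. *)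

From HB Require Import structures.
From mathcomp Require Import all_boot all_order all_algebra.
From mathcomp Require Import boolp.
From mathcomp Require Import reals Rstruct.
From mathcomp.real_closed Require Import complex.
From Stdlib Require Import Rdefinitions.

Set Implicit Arguments.
Unset Strict Implicit.
Unset Printing Implicit Defensive.

Import Order.TTheory GRing.Theory Num.Theory.
Local Open Scope ring_scope.

Definition CC : fieldType := complex Rdefinitions.R.

(** An irreducible affine variety X over C is encoded by its ring of regular
    functions O_X = A: a finitely generated commutative C-algebra which is an
    integral domain.  The points of X are the C-algebra morphisms A -> C
    (Hilbert's Nullstellensatz), and a regular function f is evaluated at the
    point phi as phi f. *)

Section Defs.
Variable A : comAlgType CC.

Inductive in_subalg (s : seq A) : A -> Prop :=
  | subalg_gen x : x \in s -> in_subalg s x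
  | subalg_scal (c : CC) : in_subalg s (c%:A)
  | subalg_add x y : in_subalg s x -> in_subalg s y -> in_subalg s (x + y)
  | subalg_mul x y : in_subalg s x -> in_subalg s y -> in_subalg s (x * y).

Definition finitely_generated_algebra : Prop :=
  exists s : seq A, forall x : A, in_subalg s x.

Definition integral_domain : Prop :=
  (1 : A) != 0 /\ forall a b : A, a * b = 0 -> a = 0 \/ b = 0.

Definition is_point (phi : A -> CC) : Prop :=
  [/\ forall a b, phi (a + b) = phi a + phi b,
      forall a b, phi (a * b) = phi a * phi b,
      phi 1 = 1 &
      forall (c : CC) a, phi (c *: a) = c * phi a].

Definition zariski_closed (Y : (A -> CC) -> Prop) : Prop :=
  exists S : A -> Prop,
    forall phi, Y phi <-> (is_point phi /\ forall f, S f -> phi f = 0).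

Definition irreducible_closed (Y : (A -> CC) -> Prop) : Prop :=
  [/\ zariski_closed Y,
      exists phi, Y phi &
      forall Y1 Y2, zariski_closed Y1 -> zariski_closed Y2 ->
        (forall phi, Y phi -> Y1 phi \/ Y2 phi) ->
        (forall phi, Y phi -> Y1 phi) \/ (forall phi, Y phi -> Y2 phi)].

Definition vanishes_on (Y : (A -> CC) -> Prop) (f : A) : Prop :=
  forall phi, Y phi -> phi f = 0.

Definition is_derivation (D : A -> A) : Prop :=
  [/\ forall a b, D (a + b) = D a + D b,
      forall (c : CC) a, D (c *: a) = c *: D a &
      forall a b, D (a * b) = a * D b + D a * b].

Definition algebraic_foliation (F : (A -> A) -> Prop) : Prop :=
  (forall D, F D -> is_derivation D) /\
  (forall D1 D2, F D1 -> F D2 -> F (fun x => D1 (D2 x) - D2 (D1 x))).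

Definition in_module_gen (F : (A -> A) -> Prop) (D : A -> A) : Prop :=
  exists (n : nat) (a : 'I_n -> A) (E : 'I_n -> A -> A),
    (forall i, F (E i)) /\ forall x, D x = \sum_(i < n) a i * E i x.

Definition generates_module (F : (A -> A) -> Prop) (r : nat)
    (d : 'I_r -> A -> A) : Prop :=
  (forall i, in_module_gen F (d i)) /\
  (forall D, in_module_gen F D ->
     exists c : 'I_r -> A, forall x, D x = \sum_(i < r) c i * d i x).

Definition iter_der (r : nat) (d : 'I_r -> A -> A) (I : seq 'I_r) (f : A) : A :=
  foldr (fun i g => d i g) f I.

(** Contact order, valued in N u {+oo}; [None] stands for +oo. *)
Definition reaches_order (r : nat) (d : 'I_r -> A -> A)
    (Y : (A -> CC) -> Prop) (f : A) (k : nat) : Prop :=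
  exists I : seq 'I_r, size I = k /\ ~ vanishes_on Y (iter_der d I f).

Lemma reaches_order_ex (r : nat) (d : 'I_r -> A -> A) Y f :
  (exists k, reaches_order d Y f k) ->
  exists k, (fun k => `[< reaches_order d Y f k >]) k.
Proof. by move=> [k Hk]; exists k; apply/asboolP. Qed.

Definition contact_order (r : nat) (d : 'I_r -> A -> A)
    (Y : (A -> CC) -> Prop) (f : A) : option nat :=
  match pselect (exists k, reaches_order d Y f k) with
  | left H => Some (ex_minn (reaches_order_ex H))
  | right _ => None
  end.

End Defs.

Definition enat_le (x y : option nat) : Prop :=
  match x, y with
  | _, None => True
  | None, Some _ => False
  | Some m, Some n => leq m n
  end.

Definition enat_min (x y : option nat) : option nat :=
  match x, y with
  | None, y => y
  | x, None => x
  | Some m, Some n => Some (minn m n)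
  end.

Definition enat_add (x y : option nat) : option nat :=
  match x, y with
  | Some m, Some n => Some (addn m n)
  | _, _ => None
  end.

From HB Require Import structures.
From mathcomp Require Import all_boot all_order all_algebra.
From mathcomp Require Import boolp Rstruct.
From mathcomp.real_closed Require Import complex.
From mathcomp Require Import ring zify.

(** Write P for the ideal I_Y, which is prime because Y is irreducible, and
    call h flat to order p when every ∂_I h with |I| < p lies in P.  Flatness
    to a given order is preserved by sums, and by the Leibniz rule the product
    of functions flat to orders p and q is flat to order p + q; this gives (1)
    and ord(fg) >= ord f + ord g.
    For the converse let m = ord f and n = ord g.  Because M_F is closed
    under brackets, the ∂_i commute modulo P on functions of high enough
    flatness, so the order-m derivatives of f behave like a symmetric form.
    Polarizing along lines c + t e_i (the value at a point of Y is a
    polynomial in t, hence nonzero for some t) yields one derivation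
    D = Σ c_i ∂_i with constant coefficients such that D^m f ∉ P and
    D^n g ∉ P.  Then D^(m+n)(fg) = C(m+n, m) D^m f D^n g modulo P, which is
    not in P since P is prime and the binomial coefficient is a unit. *)

Set Implicit Arguments.
Unset Strict Implicit.
Unset Printing Implicit Defensive.

Import GRing.Theory Num.Theory.
Local Open Scope ring_scope.

Section AdditiveFun.
Variables (U V : zmodType) (D : U -> V).
Hypothesis D_add : {morph D : x y / x + y}.

Lemma additive_fun0 : D 0 = 0.
Proof. by apply: (addrI (D 0)); rewrite -D_add !addr0. Qed.

Lemma additive_funN x : D (- x) = - D x.
Proof. by apply/eqP; rewrite -subr_eq0 opprK -D_add addNr additive_fun0. Qed.

Lemma additive_funB x y : D (x - y) = D x - D y.
Proof. by rewrite D_add additive_funN. Qed.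

Lemma additive_fun_sum n (G : 'I_n -> U) :
  D (\sum_(i < n) G i) = \sum_(i < n) D (G i).
Proof. exact: (big_morph D D_add additive_fun0). Qed.

End AdditiveFun.

Lemma additive_fun_iter (V : zmodType) (D : V -> V) k :
  {morph D : x y / x + y} -> {morph iter k D : x y / x + y}.
Proof. by move=> D_add; elim: k => [//|k IH] x y; rewrite !iterS IH D_add. Qed.

Lemma enat_le_lower x y :
  (forall p, enat_le (Some p) x -> enat_le (Some p) y) -> enat_le x y.
Proof.
case: y => [k|] h; last by case: x h.
case: x h => [m|] h /=; first exact: (h m (leqnn m)).
by have /= := h k.+1 I; rewrite ltnn.
Qed.

Lemma enat_le_min p x y :
  enat_le (Some p) (enat_min x y) <-> enat_le (Some p) x /\ enat_le (Some p) y.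
Proof.
case: x => [m|]; case: y => [n|] //=; rewrite ?leq_min; try tauto.
by split=> [/andP //|[-> ->]].
Qed.

Section ModuleGenerated.
Variables (A : comAlgType CC) (F : (A -> A) -> Prop).
Hypothesis hF : algebraic_foliation F.
Local Notation M := (in_module_gen F).

Lemma in_module_gen_ext D D' : (forall x, D x = D' x) -> M D -> M D'.
Proof.
by move=> e [n [a [E [hE hD]]]]; exists n, a, E; split=> // x; rewrite -e.
Qed.

Lemma in_module_gen_of E : F E -> M E.
Proof.
move=> hE; exists 1%N, (fun _ => 1), (fun _ => E); split=> // x.
by rewrite big_ord1 mul1r.
Qed.

Lemma in_module_gen0 : M (fun _ => 0).
Proof.
exists 0%N, (fun _ => 0), (fun _ => id); split=> [[]//|x].
by rewrite big_ord0.
Qed.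

Lemma in_module_genD D1 D2 : M D1 -> M D2 -> M (fun x => D1 x + D2 x).
Proof.
move=> [n1 [a1 [E1 [h1 e1]]]] [n2 [a2 [E2 [h2 e2]]]].
exists (n1 + n2)%N,
  (fun k => match split k with inl i => a1 i | inr j => a2 j end),
  (fun k => match split k with inl i => E1 i | inr j => E2 j end); split.
  by move=> k; case: (split k).
move=> x; rewrite big_split_ord /= e1 e2; congr (_ + _); apply: eq_bigr => i _.
  by have := unsplitK (inl i : 'I_n1 + 'I_n2) => /= ->.
by have := unsplitK (inr i : 'I_n1 + 'I_n2) => /= ->.
Qed.

Lemma in_module_genMl (a : A) D : M D -> M (fun x => a * D x).
Proof.
move=> [n [b [E [h e]]]]; exists n, (fun i => a * b i), E; split=> // x.
by rewrite e mulr_sumr; apply: eq_bigr => i _; rewrite mulrA.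
Qed.

Lemma in_module_gen_sum n (D : 'I_n -> A -> A) :
  (forall i, M (D i)) -> M (fun x => \sum_(i < n) D i x).
Proof.
elim: n D => [|n IH] D hD.
  by apply: (in_module_gen_ext _ in_module_gen0) => x; rewrite big_ord0.
apply: (@in_module_gen_ext
  (fun x => \sum_(i < n) D (widen_ord (leqnSn n) i) x + D ord_max x)).
  by move=> x; rewrite big_ord_recr.
by apply: in_module_genD => //; apply: (IH (fun i => D (widen_ord _ i))).
Qed.

Lemma in_module_gen_derivation D : M D -> is_derivation D.
Proof.
move=> [n [a [E [h e]]]]; have [hder _] := hF; split.
- move=> x y; rewrite !e -big_split; apply: eq_bigr => i _ /=.
  by have [-> _ _] := hder _ (h i); rewrite mulrDr.
- move=> c x; rewrite !e scaler_sumr; apply: eq_bigr => i _ /=.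
  by have [_ -> _] := hder _ (h i); rewrite scalerAr.
- move=> x y; rewrite !e mulr_suml mulr_sumr -big_split.
  by apply: eq_bigr => i _ /=; have [_ _ ->] := hder _ (h i); ring.
Qed.

Lemma in_module_gen_bracket (a1 a2 : A) E1 E2 : F E1 -> F E2 ->
  M (fun x => a1 * E1 (a2 * E2 x) - a2 * E2 (a1 * E1 x)).
Proof.
move=> h1 h2; have [hder hbr] := hF.
have [_ _ L1] := hder _ h1; have [_ _ L2] := hder _ h2.
apply: (@in_module_gen_ext (fun x => ((a1 * a2) * (E1 (E2 x) - E2 (E1 x))
   + (a1 * E1 a2) * E2 x) + (- (a2 * E2 a1)) * E1 x)).
  by move=> x; rewrite L1 L2; ring.
by do 2?apply: in_module_genD; apply/in_module_genMl/in_module_gen_of => //;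
  apply: hbr.
Qed.

Lemma generators_bracket r (d : 'I_r -> A -> A) : generates_module F d ->
  forall i j, exists b : 'I_r -> A,
    forall x, d i (d j x) - d j (d i x) = \sum_(k < r) b k * d k x.
Proof.
move=> [hgen hspan] i j; apply: hspan.
have [n1 [a1 [E1 [h1 e1]]]] := hgen i.
have [n2 [a2 [E2 [h2 e2]]]] := hgen j.
have F_add E : F E -> {morph E : x y / x + y} by case: hF => hder _ /hder [].
apply: (@in_module_gen_ext (fun x => \sum_(l < n1) \sum_(p < n2)
   (a1 l * E1 l (a2 p * E2 p x) - a2 p * E2 p (a1 l * E1 l x)))).
  move=> x; rewrite (e1 (d j x)) (e2 (d i x)) (e2 x) (e1 x); apply/esym.
  under eq_bigr => l _ do rewrite (additive_fun_sum (F_add _ (h1 l))) mulr_sumr.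
  under [X in _ - X]eq_bigr => p _ do
    rewrite (additive_fun_sum (F_add _ (h2 p))) mulr_sumr.
  rewrite [X in _ - X]exchange_big /= -sumrB; apply: eq_bigr => l _.
  by rewrite -sumrB.
apply: in_module_gen_sum => l; apply: in_module_gen_sum => p.
exact: in_module_gen_bracket.
Qed.

End ModuleGenerated.

Section LineExpansion.
Variables (V : lmodType CC) (D E : V -> V).
Hypotheses (D_add : {morph D : x y / x + y}) (E_add : {morph E : x y / x + y}).
Hypotheses (D_scale : forall (a : CC) x, D (a *: x) = a *: D x)
           (E_scale : forall (a : CC) x, E (a *: x) = a *: E x).

(* [line_coef k j h] is the coefficient of [t ^+ j] in [(D + t E)^k h]. *)
Fixpoint line_coef (k j : nat) (h : V) : V :=
  match k with
  | 0 => if j == 0%N then h else 0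
  | k'.+1 => D (line_coef k' j h) +
             (if j is j'.+1 then E (line_coef k' j' h) else 0)
  end.

Lemma line_coef0 k h : line_coef k 0 h = iter k D h.
Proof. by elim: k => [|k IH] //=; rewrite IH addr0. Qed.

Lemma line_coef_gt k j h : (k < j)%N -> line_coef k j h = 0.
Proof.
elim: k j => [|k IH] [|j] //= hj.
by rewrite (IH j.+1) ?(IH j) ?(additive_fun0 D_add) ?(additive_fun0 E_add) ?addr0 //;
  lia.
Qed.

Lemma iter_line_expand (t : CC) k h :
  iter k (fun x => D x + t *: E x) h = \sum_(j < k.+1) t ^+ j *: line_coef k j h.
Proof.
elim: k => [|k IH]; first by rewrite big_ord_recl big_ord0 /= expr0 scale1r addr0.
rewrite iterS IH (additive_fun_sum D_add) (additive_fun_sum E_add) scaler_sumr.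
rewrite [RHS](eq_bigr (fun j : 'I_k.+2 => t ^+ j *: D (line_coef k j h) +
   t ^+ j *: (if (j : nat) is j'.+1 then E (line_coef k j' h) else 0)));
  last by move=> j _ /=; rewrite scalerDr.
rewrite big_split /=; congr (_ + _).
  rewrite [RHS]big_ord_recr /= line_coef_gt // (additive_fun0 D_add) scaler0 addr0.
  by apply: eq_bigr => j _; rewrite D_scale.
rewrite [RHS]big_ord_recl /= scaler0 add0r; apply: eq_bigr => j _.
by rewrite E_scale scalerA -exprS /bump leq0n add1n.
Qed.

End LineExpansion.

Lemma poly_common_nonroot (p q : {poly CC}) : p != 0 -> q != 0 ->
  exists t, p.[t] != 0 /\ q.[t] != 0.
Proof.
move=> hp hq; have hpq : p * q != 0 by rewrite mulf_neq0.
pose s := [seq (i%:R : CC) | i <- iota 0 (size (p * q))].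
case: (boolP (all (root (p * q)) s)) => [hall|].
  have s_uniq : uniq s.
    by rewrite map_inj_uniq ?iota_uniq // => i j /eqP; rewrite eqr_nat => /eqP.
  by have := max_poly_roots hpq hall s_uniq; rewrite size_map size_iota ltnn.
move/allPn => [t _]; rewrite /root hornerM mulf_eq0 negb_or => /andP [h1 h2].
by exists t.
Qed.

Section Points.
Variables (A : comAlgType CC) (phi : A -> CC).
Hypothesis phi_point : is_point phi.

Lemma point0 : phi 0 = 0.
Proof. by case: phi_point => h _ _ _; apply: (additive_fun0 h). Qed.

Lemma pointN x : phi (- x) = - phi x.
Proof. by case: phi_point => h _ _ _; apply: (additive_funN h). Qed.

Lemma point_eval_sum n (t : CC) (G : nat -> A) :
  phi (\sum_(j < n) t ^+ j *: G j) = (\poly_(j < n) phi (G j)).[t].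
Proof.
rewrite horner_poly; have [ha _ _ hs] := phi_point.
by rewrite (additive_fun_sum ha); apply: eq_bigr => j _; rewrite hs mulrC.
Qed.

End Points.

Lemma zariski_closed_points (A : comAlgType CC) (Y : (A -> CC) -> Prop) :
  zariski_closed Y -> forall phi, Y phi -> is_point phi.
Proof. by move=> [S hS] phi /hS []. Qed.

Lemma irreducible_vanishes_on_prime (A : comAlgType CC) (Y : (A -> CC) -> Prop) :
  irreducible_closed Y -> forall x y,
  vanishes_on Y (x * y) -> vanishes_on Y x \/ vanishes_on Y y.
Proof.
move=> [[S hS] _ hirr] x y hxy.
have zero_locus z : zariski_closed (fun phi => Y phi /\ phi z = 0).
  exists (fun h => S h \/ h = z) => phi; split.
    move=> [/hS [hp hs] hz]; split=> // h [/hs //| -> //].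
  move=> [hp hs]; split; last by apply: hs; right.
  by apply/hS; split=> // h hh; apply: hs; left.
case: (hirr _ _ (zero_locus x) (zero_locus y)) => [phi hphi|h|h].
- have [_ hm _ _] := zariski_closed_points (ex_intro _ S hS) hphi.
  move: (hxy phi hphi); rewrite hm => /eqP; rewrite mulf_eq0.
  by case/orP => /eqP; [left|right].
- by left => phi /h [].
- by right => phi /h [].
Qed.

Section VanishingIdeal.
Variables (A : comAlgType CC) (Y : (A -> CC) -> Prop).
Hypothesis Y_points : forall phi, Y phi -> is_point phi.
Local Notation P := (vanishes_on Y).

Lemma vanishes_on0 : P 0.
Proof. by move=> phi /Y_points /point0. Qed.

Lemma vanishes_onD x y : P x -> P y -> P (x + y).
Proof.
by move=> hx hy phi hphi; have [-> _ _ _] := Y_points hphi; rewrite hx ?hy ?addr0.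
Qed.

Lemma vanishes_onN x : P x -> P (- x).
Proof. by move=> hx phi hphi; rewrite pointN ?hx ?oppr0 //; apply: Y_points. Qed.

Lemma vanishes_onB x y : P x -> P y -> P (x - y).
Proof. by move=> hx hy; apply: vanishes_onD => //; apply: vanishes_onN. Qed.

Lemma vanishes_onMl x y : P x -> P (y * x).
Proof.
by move=> hx phi hphi; have [_ -> _ _] := Y_points hphi; rewrite hx ?mulr0.
Qed.

Lemma vanishes_onMr x y : P x -> P (x * y).
Proof. by rewrite mulrC; apply: vanishes_onMl. Qed.

Lemma vanishes_onZ (c : CC) x : P x -> P (c *: x).
Proof. by rewrite -mulr_algl; apply: vanishes_onMl. Qed.

Lemma vanishes_onZK (c : CC) x : c != 0 -> P (c *: x) -> P x.
Proof.
by move=> c0 /(vanishes_onZ c^-1); rewrite scalerA mulVf ?scale1r.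
Qed.

Lemma vanishes_on_natrZK n x : (0 < n)%N -> P (n%:R *: x) -> P x.
Proof. by move=> n_gt0; apply: vanishes_onZK; rewrite pnatr_eq0 -lt0n. Qed.

Lemma not_vanishes_onP h : ~ P h <-> exists2 phi, Y phi & phi h != 0.
Proof.
split=> [hn|[phi hphi /eqP hne] hP]; last exact/hne/hP.
apply: contrapT => hn2; apply: hn => phi hphi; apply/eqP; apply: contrapT => hne.
by apply: hn2; exists phi => //; apply/negP.
Qed.

Definition eqmod a b := P (a - b).

Lemma eqmod_refl a : eqmod a a.
Proof. by rewrite /eqmod subrr; apply: vanishes_on0. Qed.

Lemma eqmod_trans a b c : eqmod a b -> eqmod b c -> eqmod a c.
Proof.
by move=> hab hbc; rewrite /eqmod -(subrKA b); apply: vanishes_onD.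
Qed.

Lemma eqmodD a b a' b' : eqmod a b -> eqmod a' b' -> eqmod (a + a') (b + b').
Proof.
move=> h h'; rewrite /eqmod opprD addrACA; exact: vanishes_onD.
Qed.

Lemma eqmod0 a : eqmod a 0 <-> P a.
Proof. by rewrite /eqmod subr0. Qed.

Lemma eqmod_vanishes a b : eqmod a b -> P a -> P b.
Proof.
by move=> hab ha; rewrite -[b](subKr a); apply: vanishes_onB.
Qed.

Section LeibnizModulo.
Variable D : A -> A.
Hypotheses (D_add : {morph D : x y / x + y})
           (D_mul : forall x y, D (x * y) = x * D y + D x * y).

Definition vanishes_iter m x := forall k, (k < m)%N -> P (iter k D x).

Lemma vanishes_iter0 x : vanishes_iter 0 x.
Proof. by []. Qed.

Lemma vanishes_iterS m x : vanishes_iter m.+1 x -> vanishes_iter m (D x).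
Proof. by move=> h k hk; rewrite -iterSr; apply: h. Qed.

Lemma vanishes_iter_le m n x : (n <= m)%N -> vanishes_iter m x -> vanishes_iter n x.
Proof. by move=> le h k hk; apply: h; lia. Qed.

(* Every other term of the Leibniz expansion of D^N (xy) has a factor D^a x with
   a < m or D^b y with b < n. *)
Lemma iter_derM_eqmod N : forall m n x y, (m + n = N)%N ->
  vanishes_iter m x -> vanishes_iter n y ->
  eqmod (iter N D (x * y)) ('C(N, m)%:R *: (iter m D x * iter n D y)).
Proof.
elim: N => [|N IH] m n x y hmn hx hy.
  have [-> ->] : m = 0%N /\ n = 0%N by lia.
  by rewrite bin0 scale1r; apply: eqmod_refl.
rewrite iterSr D_mul (additive_fun_iter _ D_add).
case: m hmn hx => [|m] hmn hx; case: n hmn hy => [|n] hmn hy //.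
- have eN : n = N by lia.
  subst n.
  have h1 := IH 0%N N x (D y) erefl (vanishes_iter0 _) (vanishes_iterS hy).
  have h2 : eqmod (iter N D (D x * y)) 0.
    apply: eqmod_trans (IH 0%N N (D x) y erefl (vanishes_iter0 _)
      (vanishes_iter_le (leqnSn N) hy)) _.
    by apply/eqmod0/vanishes_onZ/vanishes_onMl/hy.
  by rewrite -iterSr bin0 in h1; move: (eqmodD h1 h2); rewrite bin0 addr0.
- have eN : m = N by lia.
  subst m.
  have h1 : eqmod (iter N D (x * D y)) 0.
    apply: eqmod_trans (IH N 0%N x (D y) (addn0 N)
      (vanishes_iter_le (leqnSn N) hx) (vanishes_iter0 _)) _.
    by apply/eqmod0/vanishes_onZ/vanishes_onMr/hx.
  have h2 := IH N 0%N (D x) y (addn0 N) (vanishes_iterS hx) (vanishes_iter0 _).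
  by rewrite -iterSr binn in h2; move: (eqmodD h1 h2); rewrite binn add0r.
- have h1 := IH m.+1 n x (D y) ltac:(lia) hx (vanishes_iterS hy).
  have h2 := IH m n.+1 (D x) y ltac:(lia) (vanishes_iterS hx) hy.
  rewrite -iterSr in h1; rewrite -iterSr in h2.
  by move: (eqmodD h1 h2); rewrite -scalerDl -natrD -binS.
Qed.

End LeibnizModulo.

Section Flatness.
Variables (r : nat) (d : 'I_r -> A -> A).
Hypothesis d_der : forall i, is_derivation (d i).
Local Notation co := (contact_order d Y).

Lemma d_add i : {morph d i : x y / x + y}.
Proof. by case: (d_der i). Qed.

Lemma d_scale i (c : CC) x : d i (c *: x) = c *: d i x.
Proof. by case: (d_der i). Qed.

Lemma d_mul i x y : d i (x * y) = x * d i y + d i x * y.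
Proof. by case: (d_der i). Qed.

Lemma iter_der_add I : {morph iter_der d I : x y / x + y}.
Proof. by elim: I => [//|i I IH] x y /=; rewrite IH d_add. Qed.

Lemma iter_der_scale I (c : CC) x : iter_der d I (c *: x) = c *: iter_der d I x.
Proof. by elim: I => [//|i I IH] /=; rewrite IH d_scale. Qed.

Lemma iter_der_rcons I i x : iter_der d (rcons I i) x = iter_der d I (d i x).
Proof. by rewrite /iter_der foldr_rcons. Qed.

Definition flat_to p h := forall I : seq 'I_r, (size I < p)%N -> P (iter_der d I h).

Lemma flat_to_0 h : flat_to 0 h.
Proof. by []. Qed.

Lemma flat_to1 h : flat_to 1 h -> P h.
Proof. by move=> h1; apply: (h1 [::]). Qed.

Lemma flat_to_le p q h : flat_to p h -> (q <= p)%N -> flat_to q h.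
Proof. by move=> hh le I hI; apply: hh; lia. Qed.

Lemma flat_toD p x y : flat_to p x -> flat_to p y -> flat_to p (x + y).
Proof.
by move=> hx hy I hI; rewrite iter_der_add; apply: vanishes_onD; [apply: hx|apply: hy].
Qed.

Lemma flat_toB p x y : flat_to p x -> flat_to p y -> flat_to p (x - y).
Proof.
move=> hx hy I hI; rewrite (additive_funB (iter_der_add I)).
by apply: vanishes_onB; [apply: hx|apply: hy].
Qed.

Lemma flat_toZ p (c : CC) x : flat_to p x -> flat_to p (c *: x).
Proof. by move=> hx I hI; rewrite iter_der_scale; apply/vanishes_onZ/hx. Qed.

Lemma flat_to_zero p : flat_to p 0.
Proof.
by move=> I _; rewrite (additive_fun0 (iter_der_add I)); apply: vanishes_on0.
Qed.

Lemma flat_to_sum p n (G : 'I_n -> A) :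
  (forall i, flat_to p (G i)) -> flat_to p (\sum_(i < n) G i).
Proof.
by move=> h; elim/big_rec: _ => [|i y _ hy]; [apply: flat_to_zero|apply: flat_toD].
Qed.

Lemma flat_to_der p i h : flat_to p h -> flat_to p.-1 (d i h).
Proof.
by move=> hh I hI; rewrite -iter_der_rcons; apply: hh; rewrite size_rcons; lia.
Qed.

Lemma flat_toM p q a h : flat_to p a -> flat_to q h -> flat_to (p + q) (a * h).
Proof.
move=> + + I; elim/last_ind: I p q a h => [|I i IH] p q a h ha hh hI.
  case: p ha hI => [|p] ha hI; last by apply/vanishes_onMr/(ha [::]).
  exact/vanishes_onMl/(hh [::]).
rewrite size_rcons in hI; rewrite iter_der_rcons d_mul iter_der_add.
apply: vanishes_onD.
  by apply: (IH p q.-1) => //; [apply: flat_to_der|lia].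
by apply: (IH p.-1 q) => //; [apply: flat_to_der|lia].
Qed.

Lemma not_flat_toS p h : flat_to p h -> ~ flat_to p.+1 h ->
  exists I : seq 'I_r, size I = p /\ ~ P (iter_der d I h).
Proof.
move=> hp hp1; apply: contrapT => hn; apply: hp1 => I hI; apply: contrapT => hI0.
apply: hn; exists I; split=> //.
by case: (ltnP (size I) p) => [/hp //|]; lia.
Qed.

Lemma contact_order_SomeP f k : co f = Some k <-> flat_to k f /\ ~ flat_to k.+1 f.
Proof.
rewrite /contact_order; case: pselect => [H|H]; last first.
  split=> // [[hk hk1]]; have [I [hIs hI]] := not_flat_toS hk hk1.
  by case: H; exists k, I.
case: ex_minnP => m /asboolP [J [hJs hJ]] hmin; split.
  move=> [<-]; split; last by move=> hW; apply: hJ; apply: hW; lia.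
  move=> I hI; apply: contrapT => hn.
  by have := hmin (size I) (asboolT (ex_intro _ I (conj erefl hn))); lia.
move=> [hk hk1]; have [I [hIs hI]] := not_flat_toS hk hk1.
congr Some; apply/eqP; rewrite eqn_leq hmin /=; last by apply/asboolP; exists I.
by rewrite leqNgt; apply/negP => lt; apply: hJ; apply: hk; rewrite hJs.
Qed.

Lemma contact_order_NoneP f : co f = None <-> forall p, flat_to p f.
Proof.
split=> [|hf].
  rewrite /contact_order; case: pselect => // H _ p I hI.
  by apply: contrapT => hn; apply: H; exists (size I), I.
by case e: (co f) => [k|] //; move/contact_order_SomeP: e => [_ []].
Qed.

Lemma flat_to_contact_order f p : flat_to p f <-> enat_le (Some p) (co f).
Proof.
case e: (co f) => [k|] /=; last by split=> // _; move/contact_order_NoneP: e.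
move/contact_order_SomeP: e => [hk hk1]; split; last by apply: flat_to_le.
by move=> hp; rewrite leqNgt; apply/negP => lt; apply/hk1/(flat_to_le hp lt).
Qed.

Lemma contact_orderD_ge f g : enat_le (enat_min (co f) (co g)) (co (f + g)).
Proof.
apply: enat_le_lower => p /enat_le_min [].
by rewrite -!flat_to_contact_order => hf hg; apply: flat_toD.
Qed.

Lemma contact_orderD_Some f g k : co f = Some k -> flat_to k.+1 g ->
  co (f + g) = Some k.
Proof.
move=> /contact_order_SomeP [hk hk1] hg; apply/contact_order_SomeP; split.
  by apply: flat_toD => //; apply: flat_to_le hg _.
by move=> hfg; apply: hk1; rewrite -(addrK g f); apply: flat_toB.
Qed.

Lemma contact_orderD f g : co f <> co g -> co (f + g) = enat_min (co f) (co g).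
Proof.
have flat_of h k : co h = Some k -> flat_to k h by move/contact_order_SomeP => [].
case ef: (co f) => [m|]; case eg: (co g) => [n|] //= ne.
- have [lt|lt|eq] := ltngtP m n; last by case: ne; rewrite eq.
    rewrite (contact_orderD_Some ef) ?(minn_idPl (ltnW lt)) //.
    exact: flat_to_le (flat_of _ _ eg) lt.
  rewrite addrC (contact_orderD_Some eg) ?(minn_idPr (ltnW lt)) //.
  exact: flat_to_le (flat_of _ _ ef) lt.
- by rewrite (contact_orderD_Some ef) //; move/contact_order_NoneP: eg.
- by rewrite addrC (contact_orderD_Some eg) //; move/contact_order_NoneP: ef.
Qed.

Definition dirder (c : 'I_r -> CC) (x : A) := \sum_(i < r) c i *: d i x.

Lemma dirder_add c : {morph dirder c : x y / x + y}.
Proof.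
move=> x y; rewrite /dirder -big_split.
by apply: eq_bigr => i _; rewrite d_add scalerDr.
Qed.

Lemma dirder_scale c (k : CC) x : dirder c (k *: x) = k *: dirder c x.
Proof.
rewrite /dirder scaler_sumr; apply: eq_bigr => i _.
by rewrite d_scale !scalerA mulrC.
Qed.

Lemma dirder_mul c x y : dirder c (x * y) = x * dirder c y + dirder c x * y.
Proof.
rewrite /dirder mulr_sumr mulr_suml -big_split; apply: eq_bigr => i _ /=.
by rewrite d_mul scalerDr scalerAr scalerAl.
Qed.

Lemma dirder_line a u (t : CC) x :
  dirder a x + t *: dirder u x = dirder (fun k => a k + t * u k) x.
Proof.
rewrite /dirder scaler_sumr -big_split; apply: eq_bigr => k _ /=.
by rewrite scalerA scalerDl.
Qed.

Lemma dirder_delta i x : dirder (fun k => (k == i)%:R) x = d i x.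
Proof.
rewrite /dirder (bigD1 i) //= eqxx scale1r big1 ?addr0 // => k /negPf ->.
by rewrite scale0r.
Qed.

Lemma flat_to_dirder p c h : flat_to p h -> flat_to p.-1 (dirder c h).
Proof. by move=> hh; apply: flat_to_sum => i; apply/flat_toZ/flat_to_der. Qed.

Lemma flat_to_iter_dirder p c k h :
  flat_to p h -> flat_to (p - k) (iter k (dirder c) h).
Proof.
elim: k => [|k IH] hh; first by rewrite subn0.
by rewrite iterS; apply: flat_to_le (flat_to_dirder c (IH hh)) _; lia.
Qed.

Lemma flat_to_vanishes_iter p c h :
  flat_to p h -> vanishes_iter (dirder c) p h.
Proof.
move=> hh k hk; apply: flat_to1.
by apply: flat_to_le (flat_to_iter_dirder c hh) _; lia.
Qed.

Lemma iter_dirder_line_eval phi c u (t : CC) k h : is_point phi ->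
  phi (iter k (dirder (fun j => c j + t * u j)) h) =
  (\poly_(j < k.+1) phi (line_coef (dirder c) (dirder u) k j h)).[t].
Proof.
move=> hphi.
have -> : dirder (fun j => c j + t * u j) = (fun x => dirder c x + t *: dirder u x).
  by apply: funext => x; rewrite dirder_line.
rewrite iter_line_expand.
- exact: point_eval_sum.
- exact: dirder_add.
- exact: dirder_add.
- exact: dirder_scale.
- exact: dirder_scale.
Qed.

Section Multiplicativity.
Hypothesis d_bracket : forall i j, exists b : 'I_r -> A,
  forall x, d i (d j x) - d j (d i x) = \sum_(k < r) b k * d k x.
Hypothesis Y_prime : forall x y, P (x * y) -> P x \/ P y.

Lemma flat_to_bracket p i j x :
  flat_to p x -> flat_to p.-1 (d i (d j x) - d j (d i x)).
Proof.
move=> hx; have [b ->] := d_bracket i j.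
by apply: flat_to_sum => k; apply: (flat_toM (p := 0)) => //; apply: flat_to_der.
Qed.

Lemma flat_to_bracket_dirder p i c x :
  flat_to p x -> flat_to p.-1 (d i (dirder c x) - dirder c (d i x)).
Proof.
move=> hx; rewrite /dirder (additive_fun_sum (d_add i)) -sumrB.
apply: flat_to_sum => j; rewrite d_scale -scalerBr.
exact/flat_toZ/flat_to_bracket.
Qed.

Lemma flat_to_commute_iter_dirder i c k h p : (k <= p)%N -> flat_to p h ->
  flat_to (p - k) (d i (iter k (dirder c) h) - iter k (dirder c) (d i h)).
Proof.
elim: k => [|k IH] hk hh; first by rewrite /= subrr; apply: flat_to_zero.
rewrite !iterS.
set Dk := iter k (dirder c).
have -> : d i (dirder c (Dk h)) - dirder c (Dk (d i h)) =
    (d i (dirder c (Dk h)) - dirder c (d i (Dk h))) +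
    dirder c (d i (Dk h) - Dk (d i h)).
  by rewrite (additive_funB (dirder_add c)); ring.
apply: flat_toD.
  by apply: flat_to_le (flat_to_bracket_dirder i c (flat_to_iter_dirder c hh)) _; lia.
by apply: flat_to_le (flat_to_dirder c (IH ltac:(lia) hh)) _; lia.
Qed.

(* Each of the k occurrences of d_i in the t-linear part of (D + t d_i)^k h can
   be commuted to the right at the cost of flatter terms. *)
Lemma line_coef1_flat i c k h p : (k <= p)%N -> flat_to p h ->
  flat_to (p - k).+1
    (line_coef (dirder c) (d i) k 1 h - k%:R *: iter k.-1 (dirder c) (d i h)).
Proof.
elim: k => [|k IH] hk hh; first by rewrite /= scale0r subrr; apply: flat_to_zero.
rewrite /= line_coef0.
set D := dirder c.
have e : k%:R *: D (iter k.-1 D (d i h)) = k%:R *: iter k D (d i h).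
  by case: k {IH hk} => [|k]; rewrite ?scale0r // iterS.
have -> : D (line_coef D (d i) k 1 h) + d i (iter k D h) -
    k.+1%:R *: iter k D (d i h) =
  D (line_coef D (d i) k 1 h - k%:R *: iter k.-1 D (d i h)) +
  (d i (iter k D h) - iter k D (d i h)).
  by rewrite /D (additive_funB (dirder_add c)) dirder_scale e mulrSr scalerDl scale1r;
    ring.
apply: flat_toD.
  by apply: flat_to_le (flat_to_dirder c (IH ltac:(lia) hh)) _; lia.
by apply: flat_to_le (flat_to_commute_iter_dirder i c (k := k) _ hh) _; lia.
Qed.

Lemma dirder_not_vanishing m f : flat_to m f -> ~ flat_to m.+1 f ->
  exists c, ~ P (iter m (dirder c) f).
Proof.
elim: m f => [|m IH] f hm hm1.
  by exists (fun _ => 0) => /= hP; apply: hm1 => -[].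
have [I [hIs hI]] := not_flat_toS hm hm1.
case/lastP: I hIs hI => [//|I i]; rewrite size_rcons iter_der_rcons => -[hIs] hI.
have [c hc] : exists c, ~ P (iter m (dirder c) (d i f)).
  by apply: IH; [apply: (flat_to_der i hm)|move/(_ I); rewrite hIs; auto].
set D := dirder c.
have hline : ~ P (line_coef D (d i) m.+1 1 f).
  move=> hP; apply/hc/(vanishes_on_natrZK (n := m.+1)) => //.
  apply: (eqmod_vanishes _ hP); apply: flat_to1.
  by have := line_coef1_flat i c (leqnn m.+1) hm; rewrite subnn.
have [phi hphi hne] := (not_vanishes_onP _).1 hline.
pose q := \poly_(j < m.+2) phi (line_coef D (d i) m.+1 j f).
have q_neq0 : q != 0.
  apply: contraNneq hne => q0.
  have := coef_poly m.+2 (fun j => phi (line_coef D (d i) m.+1 j f)) 1.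
  by rewrite -/q q0 coef0 /= => <-.
have [t [ht _]] := poly_common_nonroot q_neq0 q_neq0.
exists (fun j => c j + t * (j == i)%:R); apply/not_vanishes_onP; exists phi => //.
rewrite iter_dirder_line_eval; last exact: Y_points.
have -> : dirder (fun j => (j == i)%:R) = d i.
  by apply: funext => x; apply: dirder_delta.
exact: ht.
Qed.

Lemma dirder_common_not_vanishing m n f g a b :
  ~ P (iter m (dirder a) f) -> ~ P (iter n (dirder b) g) ->
  exists c, ~ P (iter m (dirder c) f) /\ ~ P (iter n (dirder c) g).
Proof.
move=> hf hg.
have /not_vanishes_onP [phi hphi] :
  ~ P (iter m (dirder a) f * iter n (dirder b) g) by case/Y_prime.
have [_ -> _ _] := Y_points hphi; rewrite mulf_eq0 negb_or => /andP [hfa hgb].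
pose u i := b i - a i.
pose q k h := \poly_(j < k.+1) phi (line_coef (dirder a) (dirder u) k j h).
have line_eval k h t :
    phi (iter k (dirder (fun i => a i + t * u i)) h) = (q k h).[t].
  exact: iter_dirder_line_eval (Y_points hphi).
have line0 : (fun i => a i + 0 * u i) = a.
  by apply: funext => i; rewrite mul0r addr0.
have line1 : (fun i => a i + 1 * u i) = b.
  by apply: funext => i; rewrite mul1r addrC subrK.
have qf : q m f != 0.
  by apply: contraNneq hfa => q0; rewrite -line0 line_eval q0 horner0.
have qg : q n g != 0.
  by apply: contraNneq hgb => q0; rewrite -line1 line_eval q0 horner0.
have [t [hft hgt]] := poly_common_nonroot qf qg.
by exists (fun i => a i + t * u i); split; apply/not_vanishes_onP; exists phi;
  rewrite // line_eval.
Qed.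

Lemma not_flat_toM m n f g c : flat_to m f -> flat_to n g ->
  ~ P (iter m (dirder c) f) -> ~ P (iter n (dirder c) g) ->
  ~ flat_to (m + n).+1 (f * g).
Proof.
move=> hf hg hfc hgc hfg.
have hprod := iter_derM_eqmod (dirder_add c) (dirder_mul c) erefl
  (flat_to_vanishes_iter c hf) (flat_to_vanishes_iter c hg).
have : P ('C(m + n, m)%:R *: (iter m (dirder c) f * iter n (dirder c) g)).
  apply: (eqmod_vanishes hprod); apply: flat_to1.
  by apply: flat_to_le (flat_to_iter_dirder c hfg) _; lia.
by move/vanishes_on_natrZK; rewrite bin_gt0 leq_addr => /(_ isT) /Y_prime [].
Qed.

Lemma contact_orderM f g : co (f * g) = enat_add (co f) (co g).
Proof.
have flat_all h k : co h = None -> flat_to k h by move/contact_order_NoneP.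
case ef: (co f) => [m|]; case eg: (co g) => [n|] /=.
- move/contact_order_SomeP: ef => [hm hm1]; move/contact_order_SomeP: eg => [hn hn1].
  apply/contact_order_SomeP; split; first exact: flat_toM.
  have [a ha] := dirder_not_vanishing hm hm1.
  have [b hb] := dirder_not_vanishing hn hn1.
  have [c [hfc hgc]] := dirder_common_not_vanishing ha hb.
  exact: not_flat_toM hm hn hfc hgc.
- apply/contact_order_NoneP => p; rewrite -[p]add0n.
  exact: flat_toM (flat_to_0 f) (flat_all _ _ eg).
- apply/contact_order_NoneP => p; rewrite -[p]addn0.
  exact: flat_toM (flat_all _ _ ef) (flat_to_0 g).
- apply/contact_order_NoneP => p; rewrite -[p]addn0.
  exact: flat_toM (flat_all _ _ ef) (flat_to_0 g).
Qed.

End Multiplicativity.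
End Flatness.
End VanishingIdeal.

Theorem mainTheorem5
  (A : comAlgType CC)
  (hfg : finitely_generated_algebra A)
  (hdom : integral_domain A)
  (F : (A -> A) -> Prop)
  (hF : algebraic_foliation F)
  (r : nat) (d : 'I_r -> A -> A)
  (hd : generates_module F d)
  (Y : (A -> CC) -> Prop)
  (hY : irreducible_closed Y) :
  forall f g : A,
    (enat_le (enat_min (contact_order d Y f) (contact_order d Y g))
             (contact_order d Y (f + g)) /\
     (contact_order d Y f <> contact_order d Y g ->
      contact_order d Y (f + g) =
        enat_min (contact_order d Y f) (contact_order d Y g))) /\
    contact_order d Y (f * g) =
      enat_add (contact_order d Y f) (contact_order d Y g).
Proof.
move=> f g; have [Y_closed _ _] := hY.
have Y_points := zariski_closed_points Y_closed.
have d_der i : is_derivation (d i) := in_module_gen_derivation hF (hd.1 i).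
have d_bracket := generators_bracket hF hd.
have Y_prime := irreducible_vanishes_on_prime hY.
split; first split.
- exact: contact_orderD_ge.
- exact: contact_orderD.
- exact: contact_orderM.
Qed.
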